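(* Let $Q$ be a graph property that has an independence function or a clique function $f:\mathbb{N}\to\mathbb{N}$ such that there is a fixed $a\in\mathbb{N}$ with $f(n)\ge n/a$ for all $n\in\mathbb{N}$. Then the graph polynomial $P_Q$ is weakly distinguishing.
   Context: All graphs are finite and simple. A graph property is a class of graphs closed under isomorphism. For $A\subseteq V(G)$, $G[A]$ is the induced subgraph on $A$. A function $f:\mathbb{N}\to\mathbb{N}$ is an independence function (resp. clique function) for a property $Q$ if every graph $G\in Q$ has an independent set (resp. a clique) of size $f(|V(G)|)$. For a property $Q$, $P_Q(G;X)=\sum_{A\subseteq V(G):\, G[A]\in Q} X^{|A|}$. For a graph polynomial $P$ (an isomorphism-invariant map from graphs to polynomials), $G$ is $P$-unique if every graph $H$ with $P(G)=P(H)$ is isomorphic to $G$. Let $\mathcal{G}(n)$ be the set of isomorphism classes of graphs on $n$ vertices and $U_P(n)$ the set of $P$-unique graphs in $\mathcal{G}(n)$. $P$ is weakly distinguishing if $\lim_{n\to\infty}|U_P(n)|/|\mathcal{G}(n)|=0$. *)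

From HB Require Import structures.
From mathcomp Require Import all_boot all_order all_algebra.
From mathcomp Require Import fingroup perm.
From mathcomp Require Import boolp.
Set Implicit Arguments. Unset Strict Implicit. Unset Printing Implicit Defensive.
Import Order.TTheory GRing.Theory Num.Theory.

Definition simple_edges n (E : {set 'I_n * 'I_n}) : bool :=
  [forall x, (x, x) \notin E] &&
  [forall x, forall y, ((x, y) \in E) == ((y, x) \in E)].

Definition sgraph n := {E : {set 'I_n * 'I_n} | simple_edges E}.

Definition adj n (G : sgraph n) (x y : 'I_n) : bool := (x, y) \in val G.

Definition iso n m (G : sgraph n) (H : sgraph m) : Prop :=
  exists f : 'I_n -> 'I_m, bijective f /\
    forall x y, adj G x y = adj H (f x) (f y).

Definition iso_b n (G H : sgraph n) : bool :=
  [exists f : {perm 'I_n}, [forall x, forall y, adj G x y == adj H (f x) (f y)]].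

Definition graph_property (Q : forall n, sgraph n -> bool) : Prop :=
  forall n m (G : sgraph n) (H : sgraph m), iso G H -> Q n G = Q m H.

Definition induced_edges n (G : sgraph n) (A : {set 'I_n}) :
  {set 'I_#|A| * 'I_#|A|} :=
  [set p | adj G (enum_val p.1) (enum_val p.2)].

Lemma induced_simple n (G : sgraph n) (A : {set 'I_n}) :
  simple_edges (induced_edges G A).
Proof.
have /andP [/forallP Hirr /forallP Hsym] := valP G.
apply/andP; split; apply/forallP => x.
  by rewrite inE /adj (negbTE (Hirr _)).
apply/forallP => y; rewrite !inE /adj.
exact: (forallP (Hsym _)).
Qed.

Definition induced n (G : sgraph n) (A : {set 'I_n}) : sgraph #|A| :=
  exist _ (induced_edges G A) (induced_simple G A).

Definition independent n (G : sgraph n) (A : {set 'I_n}) : bool :=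
  [forall x in A, forall y in A, ~~ adj G x y].

Definition clique n (G : sgraph n) (A : {set 'I_n}) : bool :=
  [forall x in A, forall y in A, (x != y) ==> adj G x y].

Definition independence_function (Q : forall n, sgraph n -> bool)
  (f : nat -> nat) : Prop :=
  forall n (G : sgraph n), Q n G ->
    exists A : {set 'I_n}, independent G A /\ #|A| = f n.

Definition clique_function (Q : forall n, sgraph n -> bool)
  (f : nat -> nat) : Prop :=
  forall n (G : sgraph n), Q n G ->
    exists A : {set 'I_n}, clique G A /\ #|A| = f n.

Definition P_Q (Q : forall n, sgraph n -> bool) n (G : sgraph n) : {poly int} :=
  (\sum_(A : {set 'I_n} | Q #|A| (induced G A)) 'X^#|A|)%R.

Definition P_unique (P : forall n, sgraph n -> {poly int}) n (G : sgraph n)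
  : Prop :=
  forall m (H : sgraph m), P m H = P n G -> iso H G.

Definition graph_classes n : {set {set sgraph n}} :=
  equivalence_partition (@iso_b n) [set: sgraph n].

Definition unique_classes (P : forall n, sgraph n -> {poly int}) n
  : {set {set sgraph n}} :=
  [set C in graph_classes n | `[< forall G, G \in C -> P_unique P G >]].

Definition weakly_distinguishing (P : forall n, sgraph n -> {poly int}) : Prop :=
  forall eps : rat, (0 < eps)%R -> exists N, forall n, (N <= n)%N ->
    ((#|unique_classes P n|%:R / #|graph_classes n|%:R) < eps)%R.

(* A graph with no homogeneous set (independent set, resp. clique) of size k
   has all its induced subgraphs in Q of order less than a k, because each of
   them contains a homogeneous set on a 1/a fraction of its vertices.  So its
   P_Q is fixed by its first a k coefficients, each at most 2^n, and these
   graphs produce at most (2^n + 1)^(a k) polynomials, while the graphs that do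
   have a homogeneous k-set number at most 2^n 2^(C(n,2) - C(k,2)).  A P_Q-unique
   isomorphism class is determined by its polynomial, so for k = n / 8a there
   are at most 2^(n^2/8 + O(n)) + 2^(C(n,2) - n^2/(128 a^2) + O(n)) unique
   classes, negligible against the at least 2^C(n,2) / n! isomorphism classes. *)

From mathcomp Require Import all_boot all_order all_algebra fingroup perm zify boolp.
Set Implicit Arguments. Unset Strict Implicit. Unset Printing Implicit Defensive.
Import Order.TTheory GRing.Theory Num.Theory.

Lemma bin2_sqr k : 'C(k, 2) * 2 + k = k * k.
Proof. by elim: k => // k IH; rewrite binS bin1; nia. Qed.

Lemma leq_exp2rW m n e : m <= n -> m ^ e <= n ^ e.
Proof. by move=> le_mn; elim: e => // e IH; rewrite !expnS leq_mul. Qed.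

Lemma fact_le_expn n : n`! <= n ^ n.
Proof.
elim: n => // n IH; rewrite factS expnS leq_mul // (leq_trans IH) // leq_exp2rW // leqnSn.
Qed.

Lemma sqr_le_exp2 t : 6 <= t -> t.+1 ^ 2 <= 2 ^ t.
Proof.
elim: t => // t IH; rewrite leq_eqVlt => /orP [/eqP <- // | /[dup] /IH le_t ge_t].
by move: le_t; rewrite -!mulnn expnS; move: (2 ^ t) => p; nia.
Qed.

Lemma exp2_dominates_poly c : exists N, forall n, N <= n -> n ^ c <= 2 ^ n.
Proof.
exists (2 ^ (c + 6)) => n le_n.
have n_gt0 : 0 < n by apply: leq_trans le_n; rewrite expn_gt0.
set t := trunc_log 2 n.
have le_2t : 2 ^ t <= n := trunc_logP (isT : 1 < 2) n_gt0.
have lt_n : n < 2 ^ t.+1 := trunc_log_ltn n (isT : 1 < 2).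
have ge_t : c + 6 <= t.
  by rewrite -ltnS -(@ltn_exp2l 2) //; apply: leq_ltn_trans le_n lt_n.
apply: leq_trans (leq_exp2rW c (ltnW lt_n)) _; rewrite -expnM leq_exp2l //.
apply: leq_trans le_2t; rewrite (leq_trans _ (sqr_le_exp2 (_ : 6 <= t))) //; last by lia.
by rewrite -mulnn leq_mul2l; apply/orP; right; lia.
Qed.

(* Raising to the power c bounds n`! ^ c by (n ^ c) ^ n <= 2 ^ (n * n). *)
Lemma exp2_fact_le c n x y :
  0 < c -> n ^ c <= 2 ^ n -> c * x + n * n <= c * y -> 2 ^ x * n`! <= 2 ^ y.
Proof.
move=> c_gt0 le_nc le_xy; rewrite -(leq_exp2r _ _ c_gt0) expnMn -expnM.
apply: leq_trans (leq_mul (leqnn _) (leq_exp2rW c (fact_le_expn n))) _.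
rewrite expnAC; apply: leq_trans (leq_mul (leqnn _) (leq_exp2rW n le_nc)) _.
by rewrite -!expnM -expnD leq_exp2l // [y * c]mulnC mulnC.
Qed.

Lemma exp2S_pow_fact_le c n m x y : 0 < c -> n ^ c <= 2 ^ n ->
  c * (x + m * n.+1) + n * n <= c * y -> (2 ^ n).+1 ^ m * 2 ^ x * n`! <= 2 ^ y.
Proof.
move=> c_gt0 le_nc le_xy; rewrite -mulnA.
have le_base : (2 ^ n).+1 ^ m <= 2 ^ (m * n.+1).
  rewrite mulnC (expnM 2); apply: leq_exp2rW.
  by rewrite expnS mul2n -addnn -addn1 leq_add2l expn_gt0.
apply: leq_trans (leq_mul le_base (leqnn _)) _.
by rewrite mulnA -expnD addnC; apply: exp2_fact_le c_gt0 le_nc _.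
Qed.

Lemma leq_scale e c x y z : 0 < e -> e <= c -> e * x + z <= e * y -> c * x + z <= c * y.
Proof.
move=> e_gt0 le_ec le_xy.
have : x <= y by rewrite -(leq_pmul2l e_gt0); lia.
nia.
Qed.

Lemma bin2_div_large d k n M : n < d * k.+1 -> 4 * d + 4 * M + 8 <= k ->
  4 * d * d * (M + n) + n * n <= 4 * d * d * 'C(k, 2).
Proof.
move=> lt_n ge_k.
have sq : n * n <= d * k.+1 * (d * k.+1) by apply: leq_mul; apply: ltnW.
have inner : 4 * (M + d * k.+1) + k.+1 * k.+1 <= 4 * 'C(k, 2).
  have : (4 * d + 4 * M + 8) * k <= k * k by apply: leq_mul.
  have : M <= M * k by rewrite leq_pmulr; lia.
  have := bin2_sqr k; rewrite !mulnDl !mulnDr !mulSn !mulnS.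
  move: ('C(k, 2)) (k * k) (M * k) (d * k) => C kk Mk dk; lia.
nia.
Qed.

Lemma bin2_large c y n M : 256 <= c -> 8 * y <= n * n.+1 -> 8 * M + 8 <= n ->
  c * (M + y) + n * n <= c * 'C(n, 2).
Proof.
move=> ge_c le_y ge_n; apply: (@leq_scale 256) => //.
have := bin2_sqr n; have : 8 * n <= n * n by apply: leq_mul; lia.
by rewrite mulnS in le_y; move: ('C(n, 2)) (n * n) le_y => C nn; lia.
Qed.

Lemma ratio_vanishes (u v : nat -> nat) :
  (forall M, exists N, forall n, N <= n -> u n * 2 ^ M <= v n) ->
  forall eps : rat, (0 < eps)%R -> exists N, forall n, N <= n -> ((u n)%:R / (v n)%:R < eps)%R.
Proof.
move=> small eps eps_gt0; set M := Num.Def.archi_bound eps^-1.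
have [N le_uv] := small M; exists N => n /le_uv {}le_uv.
have gt1 : (1 < eps * 2 ^+ M)%R.
  by rewrite -ltr_pdivrMl // mulr1 upper_nthrootP.
(* When v n = 0, also u n = 0, and 0 / 0 = 0. *)
have [v0 | v_gt0] := posnP (v n).
  by move: le_uv; rewrite v0 leqn0 muln_eq0 expn_eq0 orbF => /eqP ->; rewrite mul0r.
have le_uv' : ((u n)%:R * 2 ^+ M <= (v n)%:R :> rat)%R by rewrite -natrX -natrM ler_nat.
rewrite ltr_pdivrMr ?ltr0n // -(@ltr_pM2r _ (2 ^+ M)) ?exprn_gt0 //.
apply: le_lt_trans le_uv' _.
by rewrite [(eps * _)%R]mulrC -mulrA ltr_pMr ?ltr0n.
Qed.

Lemma card_set_ord n : #|{set 'I_n}| = 2 ^ n.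
Proof.
rewrite -[in RHS](card_ord n) -[in RHS]cardsT -card_powerset.
by apply: eq_card => A; rewrite !inE subsetT.
Qed.

Lemma card_bigcup_le (I T : finType) (P : pred I) (F : I -> {set T}) :
  #|\bigcup_(i | P i) F i| <= \sum_(i | P i) #|F i|.
Proof.
apply: (big_ind2 (fun (A : {set T}) m => #|A| <= m)) => [|A m B p leA leB|//].
  by rewrite cards0.
exact: leq_trans (leq_card_setU A B) (leq_add leA leB).
Qed.

Lemma subset_of_card (T : finType) (A : {set T}) k :
  k <= #|A| -> exists2 B : {set T}, B \subset A & #|B| = k.
Proof.
move=> le_k_A; exists [set x in take k (enum A)].
  by apply/subsetP => x; rewrite inE => /mem_take; rewrite mem_enum.
rewrite cardsE (card_uniqP _) ?take_uniq ?enum_uniq // size_take -cardE.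
by case: ltngtP le_k_A.
Qed.

Section SimpleGraphs.
Variable n : nat.
Implicit Types (G H : sgraph n) (A B : {set 'I_n}) (x y : 'I_n).
Implicit Types (r : rel 'I_n) (S : {set 'I_n * 'I_n}).

Lemma adjxx G x : adj G x x = false.
Proof. by have /andP [/forallP irr _] := valP G; apply/negbTE/irr. Qed.

Lemma adjC G x y : adj G x y = adj G y x.
Proof. by have /andP [_ /forallP sym] := valP G; apply/eqP/(forallP (sym x)). Qed.

Lemma sgraph_eq G H : (forall x y, x < y -> adj G x y = adj H x y) -> G = H.
Proof.
move=> eqGH; apply: val_inj; apply/setP => -[x y]; rewrite -!/(adj _ x y).
case: (ltngtP x y) => [/eqGH // | /eqGH | /val_inj ->]; last by rewrite !adjxx.
by rewrite adjC [adj H _ _]adjC.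
Qed.

Definition sgraph_edges r : {set 'I_n * 'I_n} :=
  [set p | (p.1 != p.2) && (r p.1 p.2 || r p.2 p.1)].

Lemma sgraph_edges_simple r : simple_edges (sgraph_edges r).
Proof.
apply/andP; split; apply/forallP => x; first by rewrite inE eqxx.
apply/forallP => y; rewrite !inE /=.
by rewrite [y == x]eq_sym [r y x || _]orbC.
Qed.

Definition sgraph_of r : sgraph n := exist _ (sgraph_edges r) (sgraph_edges_simple r).

Lemma adj_sgraph_of r x y : adj (sgraph_of r) x y = (x != y) && (r x y || r y x).
Proof. by rewrite /adj inE. Qed.

Definition upper A : {set 'I_n * 'I_n} := setX A A :&: [set p : 'I_n * 'I_n | p.1 < p.2].

Lemma card_upper A : #|upper A| = 'C(#|A|, 2).
Proof.
rewrite /upper; set X := setX A A; set L := [set p : 'I_n * 'I_n | p.1 < p.2].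
set D := [set p : 'I_n * 'I_n | p.1 == p.2].
have diag : (X :\: L) :&: D = [set (x, x) | x in A].
  apply/setP => -[x y]; rewrite !inE /=; apply/idP/imsetP => [|[z zA [-> ->]]].
    by case/andP=> /andP [_ /andP [xA _]] /eqP <-; exists x.
  by rewrite ltnn zA eqxx.
have lower : (X :\: L) :\: D = [set (p.2, p.1) | p in X :&: L].
  apply/setP => -[x y]; rewrite !inE /=; apply/idP/imsetP => [|[[u v]]].
    case/and3P=> neq nlt /andP [xA yA]; exists (y, x); rewrite // !inE /= yA xA /=.
    by move: neq nlt; rewrite neq_ltn => /orP [->|].
  rewrite !inE /= => /andP [/andP [uA vA] lt] [-> ->].
  by rewrite uA vA -leqNgt (ltnW lt) neq_ltn lt orbT.
have := cardsID D (X :\: L).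
rewrite diag lower !card_imset => [|[? ?] [? ?] [-> ->] //|? ? [] //].
rewrite cardsD cardsX.
have := bin2_sqr #|A|; have := subset_leq_card (subsetIl X L); rewrite cardsX.
move: #|X :&: L| #|A| => u a; lia.
Qed.

Lemma card_sgraph_ge : 2 ^ 'C(n, 2) <= #|{: sgraph n}|.
Proof.
rewrite -[n in 'C(n, 2)]card_ord -cardsT -card_upper -card_powerset.
pose g S := sgraph_of (fun x y => (x, y) \in S).
have adj_g S x y : S \subset upper setT -> x < y -> adj (g S) x y = ((x, y) \in S).
  move=> /subsetP sub lt; rewrite adj_sgraph_of neq_ltn lt /=.
  suff -> : ((y, x) \in S) = false by rewrite orbF.
  by apply/negP => /sub; rewrite !inE /= ltnNge (ltnW lt).
apply: (@leq_card_in _ _ g) => S1 S2; rewrite !inE => sub1 sub2 eqg.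
apply/setP => -[x y]; case: (ltnP x y) => [lt | le].
  by rewrite -!adj_g // eqg.
have notin S : S \subset upper setT -> ((x, y) \in S) = false.
  by move=> /subsetP sub; apply/negP => /sub; rewrite !inE /= ltnNge le.
by rewrite !notin.
Qed.

Definition relabel (s : {perm 'I_n}) G : sgraph n :=
  sgraph_of (fun x y => adj G ((s^-1)%g x) ((s^-1)%g y)).

Lemma adj_relabel s G x y : adj (relabel s G) x y = adj G ((s^-1)%g x) ((s^-1)%g y).
Proof.
rewrite adj_sgraph_of [adj G (_ y) _]adjC orbb.
by case: eqVneq => [->|//]; rewrite adjxx.
Qed.

Lemma iso_b_refl G : iso_b G G.
Proof.
by apply/existsP; exists 1%g; apply/forallP => x; apply/forallP => y; rewrite !perm1.
Qed.

Lemma iso_b_sym G H : iso_b G H -> iso_b H G.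
Proof.
case/existsP=> f /forallP isoGH; apply/existsP; exists f^-1%g.
apply/forallP => x; apply/forallP => y.
by have /forallP /(_ (f^-1%g y)) /eqP := isoGH (f^-1%g x); rewrite !permKV => ->.
Qed.

Lemma iso_b_trans G H K : iso_b G H -> iso_b H K -> iso_b G K.
Proof.
case/existsP=> f /forallP isoGH /existsP [g /forallP isoHK]; apply/existsP; exists (f * g)%g.
apply/forallP => x; apply/forallP => y; rewrite !permM.
by have /forallP /(_ y) /eqP -> := isoGH x; have /forallP := isoHK (f x).
Qed.

Lemma iso_iso_b G H : iso G H -> iso_b G H.
Proof.
case=> f [f_bij isoGH]; apply/existsP; exists (perm (bij_inj f_bij)).
by apply/forallP => x; apply/forallP => y; rewrite !permE isoGH.
Qed.

Lemma iso_b_class_sub G : [set H | iso_b G H] \subset [set relabel s G | s : {perm 'I_n}].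
Proof.
apply/subsetP => H; rewrite inE => /existsP [f /forallP isoGH]; apply/imsetP; exists f => //.
apply: sgraph_eq => x y _; rewrite adj_relabel.
by have /forallP /(_ ((f^-1)%g y)) /eqP := isoGH ((f^-1)%g x); rewrite !permKV.
Qed.

Lemma card_iso_b_class G : #|[set H | iso_b G H]| <= n`!.
Proof.
rewrite -card_Sn; apply: leq_trans (subset_leq_card (iso_b_class_sub G)) _.
exact: leq_imset_card.
Qed.

Lemma graph_classes_partition : partition (graph_classes n) [set: sgraph n].
Proof.
apply: equivalence_partitionP => G H K _ _ _; split; first exact: iso_b_refl.
by move=> isoGH; apply/idP/idP; [apply: iso_b_trans (iso_b_sym isoGH) | apply: iso_b_trans].
Qed.

Lemma card_sgraph_le : #|{: sgraph n}| <= #|graph_classes n| * n`!.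
Proof.
rewrite -cardsT (card_partition graph_classes_partition) -sum_nat_const.
apply: leq_sum => _ /imsetP [G _ ->]; apply: leq_trans (card_iso_b_class G).
by apply: subset_leq_card; apply/subsetP => H; rewrite !inE.
Qed.

Lemma graph_class_iso_b C G H :
  C \in graph_classes n -> G \in C -> iso_b G H -> H \in C.
Proof. by case/imsetP=> K _ ->; rewrite !inE => KG /(iso_b_trans KG). Qed.

Lemma graph_classes_eq C1 C2 G : C1 \in graph_classes n -> C2 \in graph_classes n ->
  G \in C1 -> G \in C2 -> C1 = C2.
Proof.
have /and3P [_ tI _] := graph_classes_partition.
by move=> C1cl C2cl GC1 GC2; rewrite -(def_pblock tI C1cl GC1) -(def_pblock tI C2cl GC2).
Qed.

Definition class_rep (C : {set sgraph n}) : sgraph n :=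
  odflt (sgraph_of (fun _ _ => false)) [pick G in C].

Lemma class_rep_in C : C \in graph_classes n -> class_rep C \in C.
Proof.
rewrite /class_rep; case: pickP => [//|C0 Ccl].
have /and3P [_ _ classes_nonempty] := graph_classes_partition.
have C_eq0 : C = set0 by apply/setP => G; rewrite inE C0.
by move: classes_nonempty; rewrite -C_eq0 Ccl.
Qed.

Lemma card_unique_classes_le (P : forall m, sgraph m -> {poly int})
    (S : {set sgraph n}) (T : finType) (code : sgraph n -> T) :
  {in ~: S &, forall G H, code G = code H -> P n G = P n H} ->
  #|unique_classes P n| <= #|S| + #|T|.
Proof.
move=> code_P.
have uniqueP C : C \in unique_classes P n ->
    C \in graph_classes n /\ forall G, G \in C -> P_unique P G.
  by rewrite inE => /andP [? /asboolP].
rewrite -(cardsID [set C | class_rep C \in S] (unique_classes P n)); apply: leq_add.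
  rewrite -(@card_in_imset _ _ class_rep) => [|C1 C2].
    apply/subset_leq_card/subsetP => _ /imsetP [C + ->].
    by case/setIP=> _; rewrite inE.
  move=> /setIP [/uniqueP [C1cl _] _] /setIP [/uniqueP [C2cl _] _] eq_rep.
  by apply: (graph_classes_eq C1cl C2cl (class_rep_in C1cl)); rewrite eq_rep class_rep_in.
apply: (@leq_card_in _ _ (code \o class_rep)) => C1 C2.
move=> /setDP [/uniqueP [C1cl C1u] nS1] /setDP [/uniqueP [C2cl _] nS2] /= eq_code.
have eq_P : P n (class_rep C1) = P n (class_rep C2).
  by apply: code_P; rewrite // inE; [move: nS1 | move: nS2]; rewrite inE.
have := C1u _ (class_rep_in C1cl) _ _ (esym eq_P).
move=> /iso_iso_b /iso_b_sym /(graph_class_iso_b C1cl (class_rep_in C1cl)) rep2_C1.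
exact: graph_classes_eq C1cl C2cl rep2_C1 (class_rep_in C2cl).
Qed.

End SimpleGraphs.

Definition homogeneous (b : bool) n (G : sgraph n) (A : {set 'I_n}) : bool :=
  if b then independent G A else clique G A.

Definition has_homogeneous b k n (G : sgraph n) : bool :=
  [exists A : {set 'I_n}, homogeneous b G A && (#|A| == k)].

Section Homogeneous.
Variables (b : bool) (n : nat).
Implicit Types (G : sgraph n) (A B : {set 'I_n}).

Lemma adj_homogeneous G A x y :
  homogeneous b G A -> x \in A -> y \in A -> x != y -> adj G x y = ~~ b.
Proof.
case: b => /forall_inP hom xA yA neq; have := forall_inP (hom x xA) y yA.
  by move/negbTE.
by rewrite neq.
Qed.

Lemma homogeneous_sub G A B : homogeneous b G A -> B \subset A -> homogeneous b G B.
Proof.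
move=> hom /subsetP BA; case: b hom => /forall_inP hom; apply/forall_inP => x xB;
  apply/forall_inP => y yB; exact: (forall_inP (hom x (BA x xB)) y (BA y yB)).
Qed.

Lemma homogeneous_induced G A (B : {set 'I_#|A|}) :
  homogeneous b (induced G A) B -> homogeneous b G [set enum_val x | x in B].
Proof.
case: b => /forall_inP hom; apply/forall_inP => _ /imsetP [x xB ->];
  apply/forall_inP => _ /imsetP [y yB ->]; have := forall_inP (hom x xB) y yB;
  by rewrite /adj inE ?(inj_eq enum_val_inj).
Qed.

Lemma card_homogeneous_on B :
  #|[set G | homogeneous b G B]| <= 2 ^ ('C(n, 2) - 'C(#|B|, 2)).
Proof.
have sub_upper : upper B \subset upper [set: 'I_n].
  by rewrite setSI // setXS ?subsetT.
set D := upper [set: 'I_n] :\: upper B.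
rewrite -[n in 'C(n, 2)]card_ord -cardsT -!card_upper -cardsDS // -card_powerset.
rewrite -(@card_in_imset _ _ (fun G => [set p in D | adj G p.1 p.2])) => [|G H].
  apply/subset_leq_card/subsetP => _ /imsetP [G _ ->].
  by rewrite inE; apply/subsetP => p; rewrite inE => /andP [].
rewrite !inE => homG homH eqGH; apply: sgraph_eq => x y lt.
case: (boolP ((x, y) \in upper B)) => [|notB].
  rewrite !inE /= => /andP [/andP [xB yB] _].
  by rewrite !(adj_homogeneous _ xB yB) // neq_ltn lt.
have xyD : (x, y) \in D by rewrite in_setD notB !inE.
by move/setP: eqGH => /(_ (x, y)); rewrite 2!in_set xyD.
Qed.

End Homogeneous.

Lemma card_has_homogeneous b k n :
  #|[set G : sgraph n | has_homogeneous b k G]| * 2 ^ 'C(k, 2) <= 2 ^ n * 2 ^ 'C(n, 2).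
Proof.
have cover : [set G : sgraph n | has_homogeneous b k G] \subset
    \bigcup_(B : {set 'I_n} | #|B| == k) [set G | homogeneous b G B].
  apply/subsetP => G; rewrite inE => /existsP [B /andP [homB cardB]].
  by apply/bigcupP; exists B; rewrite ?inE.
apply: leq_trans (leq_mul (subset_leq_card cover) (leqnn _)) _.
apply: leq_trans (leq_mul (card_bigcup_le _ _) (leqnn _)) _.
rewrite big_distrl /= -[2 ^ n]card_set_ord.
apply: (@leq_trans (\sum_(B : {set 'I_n} | #|B| == k) 2 ^ 'C(n, 2))).
  apply: leq_sum => B /eqP cardB.
  apply: leq_trans (leq_mul (card_homogeneous_on b B) (leqnn _)) _.
  rewrite -expnD cardB subnK // leq_bin2l // -cardB -[n in _ <= n]card_ord.
  exact: max_card.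
by rewrite sum_nat_const leq_mul2r max_card orbT.
Qed.

Lemma card_has_homogeneous_small b k n M c : 0 < c -> n ^ c <= 2 ^ n ->
  c * (M + n) + n * n <= c * 'C(k, 2) ->
  #|[set G : sgraph n | has_homogeneous b k G]| * 2 ^ M * n`! <= 2 ^ 'C(n, 2).
Proof.
move=> c_gt0 le_nc /(exp2_fact_le c_gt0 le_nc) le_fact.
rewrite -(@leq_pmul2l (2 ^ n)) ?expn_gt0 //.
apply: leq_trans (card_has_homogeneous b k n).
apply: leq_trans (leq_mul (leqnn _) le_fact); rewrite expnD.
by move: #|_| (2 ^ M) (2 ^ n) n`! => X p t q; lia.
Qed.

Definition count_Q_induced (Q : forall m, sgraph m -> bool) n (G : sgraph n) j :=
  #|[set A : {set 'I_n} | Q #|A| (induced G A) & #|A| == j]|.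

Lemma coef_P_Q Q n (G : sgraph n) j : ((P_Q Q G)`_j = (count_Q_induced Q G j)%:R)%R.
Proof.
rewrite /P_Q coef_sum (eq_bigr (fun A : {set 'I_n} => (#|A| == j)%:R)%R) => [|A _].
  2: by rewrite coefXn eq_sym.
rewrite -natr_sum /count_Q_induced -sum1_card big_mkcond [in RHS]big_mkcond /=.
by congr _%:R%R; apply: eq_bigr => A _; rewrite inE; case: (Q _ _); case: (_ == j).
Qed.

Lemma count_Q_induced_le Q n (G : sgraph n) j : count_Q_induced Q G j <= 2 ^ n.
Proof. by rewrite -card_set_ord max_card. Qed.

Section HomogeneousFunction.
Variables (Q : forall m, sgraph m -> bool) (f : nat -> nat) (a : nat) (b : bool).
Hypothesis f_ge : forall m, m <= a * f m.
Hypothesis Q_homogeneous :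
  forall m (H : sgraph m), Q H -> exists2 B, homogeneous b H B & #|B| = f m.

Lemma a_gt0 : 0 < a.
Proof. by rewrite lt0n; apply: contraTneq (f_ge 1) => ->. Qed.

Lemma card_Q_induced_lt n k (G : sgraph n) A :
  ~~ has_homogeneous b k G -> Q (induced G A) -> #|A| < a * k.
Proof.
move=> noHom /Q_homogeneous [B /homogeneous_induced homB cardB].
rewrite ltnNge; apply: contra noHom => le_ak_A.
have le_k_B : k <= #|[set enum_val x | x in B]|.
  rewrite card_imset; last exact: enum_val_inj.
  by rewrite cardB -(@leq_pmul2l a) ?a_gt0 ?(leq_trans le_ak_A).
have [C subCB cardC] := subset_of_card le_k_B.
by apply/existsP; exists C; rewrite (homogeneous_sub homB subCB) cardC eqxx.
Qed.

Lemma count_Q_induced_eq0 n k (G : sgraph n) j :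
  ~~ has_homogeneous b k G -> a * k <= j -> count_Q_induced Q G j = 0.
Proof.
move=> noHom le_ak_j; apply/eqP; rewrite cards_eq0; apply/eqP/setP => A; rewrite !inE.
apply/negP => /andP [QA /eqP cardA].
by have := card_Q_induced_lt noHom QA; rewrite cardA ltnNge le_ak_j.
Qed.

Definition P_Q_code n k (G : sgraph n) : {ffun 'I_(a * k) -> 'I_(2 ^ n).+1} :=
  [ffun j : 'I_(a * k) => inord (count_Q_induced Q G j)].

Lemma P_Q_code_eq n k (G H : sgraph n) :
  ~~ has_homogeneous b k G -> ~~ has_homogeneous b k H ->
  P_Q_code k G = P_Q_code k H -> P_Q Q G = P_Q Q H.
Proof.
move=> noHomG noHomH eq_code; apply/polyP => j; rewrite !coef_P_Q.
case: (ltnP j (a * k)) => [lt_j | le_j]; last by rewrite !(count_Q_induced_eq0 _ le_j).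
move/ffunP: eq_code => /(_ (Ordinal lt_j)); rewrite !ffunE => /(congr1 val) /=.
by rewrite !inordK ?ltnS ?count_Q_induced_le // => ->.
Qed.

Lemma card_unique_P_Q n k :
  #|unique_classes (P_Q Q) n| <=
    #|[set G : sgraph n | has_homogeneous b k G]| + (2 ^ n).+1 ^ (a * k).
Proof.
have -> : (2 ^ n).+1 ^ (a * k) = #|{ffun 'I_(a * k) -> 'I_(2 ^ n).+1}|.
  by rewrite card_ffun !card_ord.
by apply: card_unique_classes_le => G H; rewrite !inE; apply: P_Q_code_eq.
Qed.

Lemma unique_classes_negligible M : exists N, forall n, N <= n ->
  #|unique_classes (P_Q Q) n| * 2 ^ M <= #|graph_classes n|.
Proof.
set d := 8 * a; set c := 4 * d * d.
have d_gt0 : 0 < d by rewrite muln_gt0 a_gt0.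
have c_gt0 : 0 < c by rewrite /c /d; lia.
have [N0 exp_dom] := exp2_dominates_poly c.
exists (N0 + d * (4 * d + 4 * M.+1 + 8)) => n le_n; set k := n %/ d.
have le_dk : d * k <= n by rewrite mulnC leq_trunc_div.
have lt_dk : n < d * k.+1 by rewrite mulnC ltn_ceil.
have ge_k : 4 * d + 4 * M.+1 + 8 <= k by rewrite leq_divRL // mulnC; lia.
have le_nc : n ^ c <= 2 ^ n by apply: exp_dom; lia.
have bad_small := card_has_homogeneous_small b c_gt0 le_nc (bin2_div_large lt_dk ge_k).
have code_small : (2 ^ n).+1 ^ (a * k) * 2 ^ M.+1 * n`! <= 2 ^ 'C(n, 2).
  apply: exp2S_pow_fact_le c_gt0 le_nc _; apply: bin2_large.
  - by rewrite /c /d; lia.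
  - by rewrite !mulnA leq_mul2r le_dk orbT.
  - have : 8 * k <= n by apply: leq_trans le_dk; rewrite leq_mul2r leq_pmulr ?a_gt0 ?orbT.
    lia.
rewrite -(@leq_pmul2r n`!) ?fact_gt0 //.
have := leq_mul (leq_mul (card_unique_P_Q n k) (leqnn (2 ^ M.+1))) (leqnn n`!).
have := leq_trans (card_sgraph_ge n) (card_sgraph_le n).
move: bad_small code_small; rewrite expnS.
move: #|unique_classes _ _| #|[set G | _]| (_ ^ (a * k)) #|graph_classes n| (2 ^ M) n`!.
by move: (2 ^ 'C(n, 2)) => t U B C K p q; lia.
Qed.

End HomogeneousFunction.

Unset Implicit Arguments.

Theorem theorem3 (Q : forall n, sgraph n -> bool) :
  graph_property Q ->
  (exists (f : nat -> nat) (a : nat),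
      (0 < a)%N /\ (forall n, (n <= a * f n)%N) /\
      (independence_function Q f \/ clique_function Q f)) ->
  weakly_distinguishing (P_Q Q).
Proof.
move=> _ [f [a [_ [f_ge hom_fun]]]].
have [b Q_homogeneous] : exists b, forall m (H : sgraph m),
    Q m H -> exists2 B, homogeneous b H B & #|B| = f m.
  by case: hom_fun => hom_fun; [exists true | exists false] => m H /hom_fun [B []]; exists B.
move=> eps eps_gt0; apply: ratio_vanishes eps_gt0 => M.
exact: unique_classes_negligible f_ge Q_homogeneous M.
Qed.
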